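(* For every integer $N\ge 12$, there exists an equal norm tight integer frame with $2N$ elements in $\mathcal{H}_5$.
   Context: $\mathcal{H}_M$ is the real $M$-dimensional Hilbert space, identified with $\mathbb{R}^M$ via a fixed orthonormal basis. An equal norm tight integer frame (ENTIF) with $N$ elements in $\mathcal{H}_M$ is an $M\times N$ integer matrix $A$ of rank $M$ with $AA^T=\lambda I_M$ for some $\lambda>0$ and all columns of the same Euclidean norm. *)

From mathcomp Require Import all_boot all_order all_algebra.
Set Implicit Arguments. Unset Strict Implicit. Unset Printing Implicit Defensive.
Import Order.TTheory GRing.Theory Num.Theory.
Local Open Scope ring_scope.

(* Equal norm tight integer frame with N elements in H_M (= R^M):
   an M x N integer matrix A of rank M (rank over the reals; since A has
   integer entries we compute it over rat, which gives the same rank),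
   with A A^T = lambda I_M for some lambda > 0, and all columns of the
   same Euclidean norm (equivalently same squared norm, an integer). *)
Definition is_ENTIF (M N : nat) (A : 'M[int]_(M, N)) : Prop :=
  \rank (map_mx (intr : int -> rat) A) = M /\
  (exists lambda : int, 0 < lambda /\ A *m A^T = lambda%:M) /\
  (forall j k : 'I_N, \sum_(i < M) A i j ^+ 2 = \sum_(i < M) A i k ^+ 2).

(* Tight frames whose columns all have the same squared norm c can be concatenated, since
   their frame operators add up.  Two explicit integer frames in dimension 5 with c = 5, of
   sizes 8 and 10, therefore give one of every size 8a + 10b, and every N >= 12 is of the
   form 4a + 5b.  Taking traces, 5 lambda = 2N * 5, so lambda > 0, and A A^T = lambda I with
   lambda <> 0 forces A to have full rank. *)
From mathcomp Require Import all_boot all_order all_algebra.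
From mathcomp Require Import zify.
Set Implicit Arguments. Unset Strict Implicit. Unset Printing Implicit Defensive.
Import Order.TTheory GRing.Theory Num.Theory.

Local Open Scope ring_scope.

Definition tightmx (M n : nat) (A : 'M[int]_(M, n)) : Prop :=
  exists lambda : int, A *m A^T = lambda%:M.

Definition equal_normmx (M n : nat) (c : int) (A : 'M[int]_(M, n)) : Prop :=
  forall j : 'I_n, \sum_(i < M) A i j ^+ 2 = c.

Definition has_ENT_frame (M n : nat) (c : int) : Prop :=
  exists A : 'M[int]_(M, n), tightmx A /\ equal_normmx c A.

Lemma rank_tight_frame (M n : nat) (A : 'M[int]_(M, n)) (lambda : int) :
  lambda != 0 -> A *m A^T = lambda%:M ->
  \rank (map_mx (intr : int -> rat) A) = M.
Proof.
move=> lambda_neq0 hA; set B := map_mx _ A.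
have BBt : B *m B^T = (lambda%:~R : rat)%:M.
  by rewrite /B map_trmx -map_mxM hA map_scalar_mx.
have rank_BBt : \rank (B *m B^T) = M.
  apply: mxrank_unit; rewrite BBt unitmxE det_scalar unitfE expf_neq0 //.
  by rewrite intr_eq0.
apply/eqP; rewrite eqn_leq rank_leq_row -{1}rank_BBt.
exact: mxrankM_maxl.
Qed.

Lemma frame_bound (M n : nat) (c lambda : int) (A : 'M[int]_(M, n)) :
  A *m A^T = lambda%:M -> equal_normmx c A -> lambda *+ M = c *+ n.
Proof.
move=> hA hc; rewrite -mxtrace_scalar -hA /mxtrace.
under eq_bigr => i _ do rewrite mxE.
rewrite exchange_big /=; transitivity (\sum_(j < n) c); last first.
  by rewrite sumr_const card_ord.
apply: eq_bigr => j _; rewrite -(hc j); apply: eq_bigr => i _.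
by rewrite mxE expr2.
Qed.

Lemma has_ENT_frame0 (M : nat) (c : int) : has_ENT_frame M 0 c.
Proof.
exists 0; split; last by case.
by exists 0; rewrite mul0mx raddf0.
Qed.

Lemma has_ENT_frameD (M n m : nat) (c : int) :
  has_ENT_frame M n c -> has_ENT_frame M m c -> has_ENT_frame M (n + m) c.
Proof.
move=> [A [[la hA] cA]] [B [[lb hB] cB]].
exists (row_mx A B); split.
  by exists (la + lb); rewrite tr_row_mx mul_row_col hA hB raddfD.
move=> j; case: (split_ordP j) => k ->.
  by rewrite -(cA k); apply: eq_bigr => i _; rewrite row_mxEl.
by rewrite -(cB k); apply: eq_bigr => i _; rewrite row_mxEr.
Qed.

Lemma has_ENT_frameMn (M n k : nat) (c : int) :
  has_ENT_frame M n c -> has_ENT_frame M (k * n) c.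
Proof.
move=> frame_n; elim: k => [|k IHk]; first exact: has_ENT_frame0.
by rewrite mulSn; apply: has_ENT_frameD.
Qed.

Definition mx_of_seq (M n : nat) (rows : seq (seq int)) : 'M[int]_(M, n) :=
  \matrix_(i < M, j < n) nth 0 (nth [::] rows i) j.

Lemma has_ENT_frame8 : has_ENT_frame 5 8 5.
Proof.
exists (mx_of_seq 5 8
  [:: [:: 2; 2; 0; 0; 0; 0; 0; 0];
      [:: 1; -1; 1; 1; 1; 1; 1; 1];
      [:: 0; 0; 2; 0; 0; 0; 0; -2];
      [:: 0; 0; 0; 2; 0; 0; -2; 0];
      [:: 0; 0; 0; 0; 2; -2; 0; 0]]); split.
  exists 8; apply/matrixP => i j; rewrite !mxE !big_ord_recr big_ord0 /= !mxE.
  by case: i => [[|[|[|[|[|i]]]]] Hi]; case: j => [[|[|[|[|[|j]]]]] Hj].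
move=> j; rewrite !big_ord_recr big_ord0 /= !mxE.
by case: j => [[|[|[|[|[|[|[|[|j]]]]]]]] Hj].
Qed.

Lemma has_ENT_frame10 : has_ENT_frame 5 10 5.
Proof.
exists (mx_of_seq 5 10
  [:: [:: 2; 2; 1; 1; 0; 0; 0; 0; 0; 0];
      [:: 1; 1; -2; -2; 0; 0; 0; 0; 0; 0];
      [:: 0; 0; 0; 0; 2; 2; 1; 1; 0; 0];
      [:: 0; 0; 0; 0; 1; 0; 0; -2; 2; 1];
      [:: 0; 0; 0; 0; 0; 1; -2; 0; 1; -2]]); split.
  exists 10; apply/matrixP => i j; rewrite !mxE !big_ord_recr big_ord0 /= !mxE.
  by case: i => [[|[|[|[|[|i]]]]] Hi]; case: j => [[|[|[|[|[|j]]]]] Hj].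
move=> j; rewrite !big_ord_recr big_ord0 /= !mxE.
by case: j => [[|[|[|[|[|[|[|[|[|[|j]]]]]]]]]] Hj].
Qed.

Lemma sum_4_5_of_ge12 (N : nat) : (12 <= N)%N -> exists a b, N = (4 * a + 5 * b)%N.
Proof.
by move=> N_ge12; exists ((N - 5 * (N %% 4)) %/ 4)%N, (N %% 4)%N; lia.
Qed.

Theorem corollary6p8 :
  forall N : nat, (12 <= N)%N ->
    exists A : 'M[int]_(5, 2 * N), is_ENTIF A.
Proof.
move=> N N_ge12; have [a [b N_ab]] := sum_4_5_of_ge12 N_ge12.
have frame : has_ENT_frame 5 (2 * N) 5.
  have -> : (2 * N = a * 8 + b * 10)%N by lia.
  apply: has_ENT_frameD; apply: has_ENT_frameMn.
    exact: has_ENT_frame8.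
  exact: has_ENT_frame10.
have [A [[lambda hA] cA]] := frame.
have lambda_eq : lambda *+ 5 = 5 *+ (2 * N) := frame_bound hA cA.
have lambda_gt0 : 0 < lambda by lia.
exists A; split; first exact: (rank_tight_frame (lt0r_neq0 lambda_gt0) hA).
split; first by exists lambda.
by move=> j k; rewrite !cA.
Qed.
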